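(* Let $n\ge 2$, $m\ge 1$ and $j\ge 1$ be integers, and for $y>0$ let $D_{m+1}(y)$ be the determinant of the $(m+1)\times(m+1)$ Hankel matrix whose $(i,k)$ entry, for $0\le i,k\le m$, is $\psi_2^{(n+(i+k)j)}(y)$. Then $y\mapsto(-1)^{(n+1)(m+1)}D_{m+1}(y)$ is completely monotonic on $(0,\infty)$.
   Context: For an integer $n\ge 2$ and $x>0$, the poly-double gamma function is defined by $$\psi_2^{(n)}(x)=(-1)^{n+1}\,n!\sum_{k=0}^{\infty}\frac{1+k}{(x+k)^{n+1}} .$$ A real-valued $C^\infty$ function $f$ on $(0,\infty)$ is called completely monotonic if $(-1)^k f^{(k)}(x)\ge 0$ for all integers $k\ge 0$ and all $x>0$. *)

From Stdlib Require Import Reals.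
From Coquelicot Require Import Coquelicot.
From mathcomp Require Import all_boot all_algebra.
From mathcomp Require Import Rstruct.

Open Scope R_scope.

Definition psi2 (n : nat) (x : R) : R :=
  (-1) ^ (n + 1) * INR (Stdlib.Arith.Factorial.fact n) *
  Series (fun k : nat => (1 + INR k) / (x + INR k) ^ (n + 1)).

Definition hankel_psi2 (n m j : nat) (y : R) : 'M[R]_(m.+1) :=
  \matrix_(i < m.+1, k < m.+1) psi2 (n + (i + k) * j)%N y.

Definition D_hankel (n m j : nat) (y : R) : R := (\det (hankel_psi2 n m j y))%R.

Definition completely_monotonic (f : R -> R) : Prop :=
  forall (k : nat) (x : R), 0 < x ->
    ex_derive_n f k x /\ 0 <= (-1) ^ k * Derive_n f k x.

(* Write [psi2 q = (-1)^(q+1) * psi2_abs q] with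
   [psi2_abs q y = q! * sum_k (1 + k) / (y + k)^(q+1) > 0], so that [psi2_abs q' = - psi2_abs q.+1].
   Up to the sign [(-1)^((n+1)(m+1))], D_{m+1} is the determinant of [psi2_abs (n + (i+k) j)];
   differentiating one row raises its index by one, so the k-th derivative is [(-1)^k] times a
   sum of determinants of row-shifted matrices, and that sum is invariant under permuting the
   rows.  It therefore suffices that, for every shift vector [b], the sum over row permutations
   [pi] of [det (psi2_abs (n + b (pi i) + (i+k) j))] is nonnegative.  By Vandermonde's identity,
   [(A+B+e)! / a^(A+B+e+1)
      = sum_u (u+1)^e / a^(e+1) * (A! C(A+e,u+e) / a^A) * (B! C(B+e,u+e) / a^B)]  (e <= 1),
   so once the series are truncated every row is a Gram kernel
   [sum_p w_r p * g_r p i * g_r p k] with [w_r >= 0], and then the permutation sum equals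
   [sum_f prod_r w_r (f r) * (det (g_r (f r) k))^2 >= 0]. *)

From Stdlib Require Import Reals Lra Lia FunctionalExtensionality.
From Coquelicot Require Import Coquelicot.
From mathcomp Require Import all_boot all_algebra all_fingroup.
From mathcomp Require Import Rstruct zify.
From mathcomp Require ring.
Open Scope R_scope.

Definition inv_consecutive (k : nat) : R := / ((INR k + 1) * (INR k + 2)).

Lemma ex_series_inv_consecutive : ex_series inv_consecutive.
Proof.
exists 1; change (is_lim_seq (sum_n inv_consecutive) 1).
apply: (is_lim_seq_ext (fun N => 1 - / (INR N + 2))).
  elim=> [|N IH]; first by rewrite sum_O /inv_consecutive /=; field.
  rewrite sum_Sn -IH /plus /inv_consecutive S_INR /=.
  by have := pos_INR N => ?; field; lra.
have -> : Rbar.Finite 1 = Rbar.Finite (1 - 0) by congr Rbar.Finite; ring.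
apply: is_lim_seq_minus'; first exact: is_lim_seq_const.
have -> : Rbar.Finite 0 = Rbar_inv p_infty by [].
apply: is_lim_seq_inv => //.
apply: (is_lim_seq_ext (fun N => INR (N + 2))).
  by move=> N; rewrite plus_INR.
exact/(is_lim_seq_incr_n INR 2 p_infty)/is_lim_seq_INR.
Qed.

Lemma CVU_series_dominated (f : nat -> R -> R) (B : nat -> R) (c : R) (r : posreal) :
  (forall k y, Boule c r y -> Rabs (f k y) <= B k) -> ex_series B ->
  CVU (fun N y => sum_n (fun k => f k y) N) (fun y => Series (fun k => f k y)) c r.
Proof.
move=> hfB hB eps heps.
have [N hN] := proj1 (is_series_Reals _ _) (Series_correct _ hB) eps heps.
exists N => M y hM hy.
have hfabs : ex_series (fun k => Rabs (f k y)).
  apply: (@ex_series_le R_AbsRing R_CompleteNormedModule _ B) => // k.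
  by change (Rabs (Rabs (f k y)) <= B k); rewrite Rabs_Rabsolu; apply: hfB.
have hf := ex_series_Rabs _ hfabs.
have hBM := hN M hM; rewrite /R_dist (Series_incr_n B M.+1) // in hBM; last lia.
rewrite sum_n_Reals (Series_incr_n _ M.+1) //; last lia.
have htail : Rabs (Series (fun k => f (M.+1 + k)%nat y))
    <= Series (fun k => B (M.+1 + k)%nat).
  apply: Rle_trans (Series_Rabs _ _) _.
    by apply/(ex_series_incr_n (fun k => Rabs (f k y))).
  apply: Series_le; last by apply/(ex_series_incr_n B).
  by move=> k; split; [exact: Rabs_pos | exact: hfB].
move: hBM htail => /=; rewrite Rplus_minus_l => hBM htail.
apply: Rle_lt_trans htail _; apply: Rle_lt_trans hBM.
rewrite Rminus_plus_distr Rminus_diag Rminus_0_l Rabs_Ropp; exact: Rle_abs.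
Qed.

Definition psi2_term (p : nat) (y : R) (k : nat) : R := (1 + INR k) / (y + INR k) ^ p.

Lemma psi2_term_ge0 p y k : 0 < y -> 0 <= psi2_term p y k.
Proof.
move=> hy; have := pos_INR k => hk.
apply: Rmult_le_pos; first lra.
by apply: Rlt_le; apply: Rinv_0_lt_compat; apply: pow_lt; lra.
Qed.

Lemma psi2_term_le p b y k : 0 < b <= 1 -> b <= y -> (3 <= p)%nat ->
  psi2_term p y k <= 2 / b ^ p * inv_consecutive k.
Proof.
move=> hb hby hp; rewrite /psi2_term /inv_consecutive.
have := pos_INR k; set K := INR k => hK.
have hbp : 0 < b ^ p by apply: pow_lt; lra.
have hK3 : (1 + K) ^ 3 <= (1 + K) ^ p by apply: Rle_pow; [lra | apply/leP].
have hyK : b ^ p * (1 + K) ^ p <= (y + K) ^ p.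
  by rewrite -Rpow_mult_distr; apply: pow_incr; nra.
have hden : b ^ p * (1 + K) ^ 3 <= (y + K) ^ p.
  by apply: Rle_trans hyK; apply: Rmult_le_compat_l; lra.
apply: (Rle_trans _ (/ (b ^ p * (1 + K) ^ 2))).
  have -> : / (b ^ p * (1 + K) ^ 2) = (1 + K) / (b ^ p * (1 + K) ^ 3) by field; lra.
  apply: Rmult_le_compat_l; first lra.
  by apply: Rinv_le_contravar => //; apply: Rmult_lt_0_compat => //; apply: pow_lt; lra.
have -> : 2 / b ^ p * / ((K + 1) * (K + 2)) = / (b ^ p * ((K + 1) * (K + 2)) / 2)
  by field; lra.
apply: Rinv_le_contravar.
  by apply: Rdiv_lt_0_compat; [apply: Rmult_lt_0_compat => //; nra | lra].
by rewrite /= Rmult_1_r; nra.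
Qed.

Lemma psi2_term_dominated p y : 0 < y -> (3 <= p)%nat ->
  exists2 B : nat -> R, ex_series B &
    forall k z, y <= z -> Rabs (psi2_term p z k) <= B k.
Proof.
move=> hy hp; set b := Rmin y 1.
have hb : 0 < b <= 1 by split; [apply: Rmin_glb_lt; lra | apply: Rmin_r].
exists (fun k => 2 / b ^ p * inv_consecutive k).
  exact: (@ex_series_scal_l R_AbsRing R_NormedModule) ex_series_inv_consecutive.
move=> k z hz; rewrite Rabs_pos_eq; last by apply: psi2_term_ge0; lra.
by apply: psi2_term_le => //; apply: Rle_trans (Rmin_l _ _) hz.
Qed.

Lemma ex_series_psi2_term p y : 0 < y -> (3 <= p)%nat -> ex_series (psi2_term p y).
Proof.
move=> hy hp; have [B hB hdom] := psi2_term_dominated p y hy hp.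
apply: (@ex_series_le R_AbsRing R_CompleteNormedModule _ B) hB => k.
exact: hdom (Rle_refl y).
Qed.

Lemma is_derive_psi2_term p y k : 0 < y ->
  is_derive (fun z => psi2_term p z k) y (- INR p * psi2_term p.+1 y k).
Proof.
move=> hy; have := pos_INR k => hk; rewrite /psi2_term.
auto_derive; first by apply: pow_nonzero; lra.
case: p => [|p] /=; first by field; lra.
by field; split; [apply: pow_nonzero|]; lra.
Qed.

Lemma is_derive_Series_psi2_term p x : 0 < x -> (3 <= p)%nat ->
  is_derive (fun y => Series (psi2_term p y)) x (- INR p * Series (psi2_term p.+1 x)).
Proof.
move=> hx hp.
have hr : 0 < x / 2 by lra.
set r := mkposreal _ hr.
have hball y : Boule x r y -> x / 2 < y.
  by rewrite /Boule /= => /Rabs_def2; lra.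
have [B hB hdom] := psi2_term_dominated p.+1 (x / 2) hr (leqW hp).
have hcvu : CVU (fun N y => sum_n (fun k => - INR p * psi2_term p.+1 y k) N)
    (fun y => Series (fun k => - INR p * psi2_term p.+1 y k)) x r.
  apply: (CVU_series_dominated (fun k y => - INR p * psi2_term p.+1 y k)
           (fun k => INR p * B k)) => [k y hy|].
    rewrite Rabs_mult Rabs_Ropp (Rabs_pos_eq (INR p)); last exact: pos_INR.
    by apply: Rmult_le_compat_l; [exact: pos_INR | apply: hdom; have := hball y hy; lra].
  exact: (@ex_series_scal_l R_AbsRing R_NormedModule).
have hcv y : Boule x r y -> Un_cv (fun N => sum_n (psi2_term p y) N) (Series (psi2_term p y)).
  move=> hy; apply/is_lim_seq_Reals; apply: Series_correct.
  by apply: ex_series_psi2_term => //; have := hball y hy; lra.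
have hder N y : Boule x r y -> derivable_pt_lim (fun z => sum_n (psi2_term p z) N) y
    (sum_n (fun k => - INR p * psi2_term p.+1 y k) N).
  move=> hy; apply/is_derive_Reals; apply: is_derive_sum_n => k _.
  by apply: is_derive_psi2_term; have := hball y hy; lra.
rewrite -Series_scal_l; apply/is_derive_Reals.
exact: (CVU_derivable _ _ _ _ _ _ hcvu hcv hder x (Boule_center x r)).
Qed.

Definition psi2_abs (q : nat) (y : R) : R :=
  INR (Factorial.fact q) * Series (psi2_term (q + 1) y).

Lemma psi2E q y : psi2 q y = (-1) ^ (q + 1) * psi2_abs q y.
Proof. by rewrite /psi2 /psi2_abs /psi2_term Rmult_assoc. Qed.

Lemma is_derive_psi2_abs q x : 0 < x -> (2 <= q)%nat ->
  is_derive (psi2_abs q) x (- psi2_abs q.+1 x).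
Proof.
move=> hx hq; rewrite /psi2_abs.
have -> : - (INR (Factorial.fact q.+1) * Series (psi2_term (q.+1 + 1) x))
    = INR (Factorial.fact q) * (- INR (q + 1) * Series (psi2_term (q + 1).+1 x)).
  rewrite addSn Rfunctions.fact_simpl mult_INR addn1 S_INR; ring.
by apply: is_derive_scal; apply: is_derive_Series_psi2_term; rewrite // addn1.
Qed.

Definition psi2_abs_trunc (K q : nat) (y : R) : R :=
  INR (Factorial.fact q) * (\sum_(k < K) psi2_term (q + 1) y k)%R.

Lemma is_lim_seq_psi2_abs_trunc q y : 0 < y -> (2 <= q)%nat ->
  is_lim_seq (fun K => psi2_abs_trunc K q y) (psi2_abs q y).
Proof.
move=> hy hq; apply/is_lim_seq_incr_1.
apply: (is_lim_seq_ext (fun K => INR (Factorial.fact q) * sum_n (psi2_term (q + 1) y) K)).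
  by move=> K; rewrite /psi2_abs_trunc sum_n_Reals sum_f_R0E big_mkord.
apply: is_lim_seq_mult'; first exact: is_lim_seq_const.
apply: Series_correct.
by apply: ex_series_psi2_term; rewrite // addn1.
Qed.

Section GramFactorial.
Import ring.
Local Open Scope nat_scope.

Lemma Vandermonde_shift X Y e L : Y < L ->
  \sum_(u < L) 'C(X, u) * 'C(Y + e, u + e) = 'C(X + (Y + e), Y).
Proof.
move=> hYL; rewrite -(binomial.Vandermonde X (Y + e) Y).
rewrite -(big_mkord xpredT (fun u => 'C(X, u) * 'C(Y + e, u + e))).
rewrite (big_cat_nat _ (n := Y.+1)) //=.
rewrite [X in _ + X]big1_seq ?addn0; last first.
  move=> i /andP[_]; rewrite mem_index_iota => /andP[hi _].
  by rewrite (bin_small (n := Y + e)) ?muln0 //; lia.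
rewrite big_mkord; apply: eq_bigr => u _.
have hu : u <= Y by rewrite -ltnS.
by rewrite -(bin_sub (n := Y + e) (m := u + e)) ?leq_add2r // subnDr.
Qed.

(* For [e = 0] this is Vandermonde's identity; for [e = 1] the extra weight [u + 1] absorbs
   [u.+1 * 'C(A.+1, u.+1) = A.+1 * 'C(A, u)]. *)
Lemma fact_gram A B e L : e <= 1 -> B < L ->
  (A + B + e)`! = \sum_(u < L) u.+1 ^ e * (A`! * 'C(A + e, u + e)) * (B`! * 'C(B + e, u + e)).
Proof.
move=> he hBL.
have -> : \sum_(u < L) u.+1 ^ e * (A`! * 'C(A + e, u + e)) * (B`! * 'C(B + e, u + e))
    = (A + e)`! * B`! * \sum_(u < L) 'C(A, u) * 'C(B + e, u + e).
  rewrite big_distrr; apply: eq_bigr => u _ /=.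
  case: e he => [|[|//]] _ /=; first by rewrite !addn0 expn0 mul1n; ring.
  rewrite expn1 !addn1 factS.
  have -> : u.+1 * (A`! * 'C(A.+1, u.+1)) * (B`! * 'C(B.+1, u.+1))
      = A`! * B`! * (u.+1 * 'C(A.+1, u.+1)) * 'C(B.+1, u.+1) by ring.
  rewrite -(mul_bin_diag A.+1 u) /=; ring.
rewrite Vandermonde_shift //.
have hB : B <= A + (B + e) by lia.
rewrite -addnA -(bin_fact hB) (_ : A + (B + e) - B = A + e); [ring | lia].
Qed.

End GramFactorial.

Definition gram_weight (e : nat) (y : R) (k u : nat) : R :=
  (1 + INR k) * INR (u.+1 ^ e) / (y + INR k) ^ (e + 1).

Definition gram_vector (e A : nat) (y : R) (k u : nat) : R :=
  INR (A`! * 'C(A + e, u + e)) / (y + INR k) ^ A.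

Lemma gram_weight_ge0 e y k u : 0 < y -> 0 <= gram_weight e y k u.
Proof.
move=> hy; have := pos_INR k => hk; rewrite /gram_weight.
apply: Rmult_le_pos; first by apply: Rmult_le_pos; [lra | exact: pos_INR].
by apply: Rlt_le; apply: Rinv_0_lt_compat; apply: pow_lt; lra.
Qed.

Lemma psi2_term_gram e A B y k u (NA NB : nat) : 0 < y ->
  INR (u.+1 ^ e * NA * NB) * psi2_term (A + B + e + 1) y k
  = gram_weight e y k u * (INR NA / (y + INR k) ^ A) * (INR NB / (y + INR k) ^ B).
Proof.
move=> hy; have := pos_INR k => hk.
rewrite /psi2_term /gram_weight !mult_INR.
rewrite (_ : (A + B + e + 1 = (e + 1) + A + B)%nat); last lia.
rewrite !pow_add.
have ? : (y + INR k) ^ e <> 0 by apply: pow_nonzero; lra.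
have ? : (y + INR k) ^ A <> 0 by apply: pow_nonzero; lra.
have ? : (y + INR k) ^ B <> 0 by apply: pow_nonzero; lra.
by field; lra.
Qed.

Lemma psi2_abs_trunc_gram K L A B e y : 0 < y -> (e <= 1)%nat -> (B < L)%nat ->
  psi2_abs_trunc K (A + B + e) y =
  (\sum_(p : 'I_K * 'I_L) gram_weight e y p.1 p.2
     * gram_vector e A y p.1 p.2 * gram_vector e B y p.1 p.2)%R.
Proof.
move=> hy he hBL.
rewrite -(pair_bigA _ (fun (k : 'I_K) (u : 'I_L) => gram_weight e y k u
     * gram_vector e A y k u * gram_vector e B y k u)) /=.
rewrite /psi2_abs_trunc factE (fact_gram A B e L he hBL) INRE RmultE.
rewrite (@GRing.natr_sum R) GRing.mulr_suml exchange_big /=.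
apply: eq_bigr => k _; rewrite GRing.mulr_sumr; apply: eq_bigr => u _.
by rewrite -INRE -RmultE psi2_term_gram.
Qed.

Section MixedGramDeterminant.
Import ring GRing.Theory Num.Theory.
Local Open Scope ring_scope.
Variables (F : realDomainType) (N : nat).

(* Substituting [r = pi i], [a = pi^-1] and [b = pi^-1 * s]. *)
Lemma sum_perm_det_row_types (M : 'I_N -> 'I_N -> 'I_N -> F) :
  \sum_(pi : 'S_N) \det (\matrix_(i, k) M (pi i) i k)
  = \sum_(a : 'S_N) \sum_(b : 'S_N) (-1) ^+ a * (-1) ^+ b * \prod_(r < N) M r (a r) (b r).
Proof.
rewrite [RHS](reindex_inj invg_inj) /=; apply: eq_bigr => pi _.
rewrite [RHS](reindex_inj (mulgI pi^-1)%g) /=; apply: eq_bigr => s _.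
rewrite odd_permM signr_addb odd_permV signrMK; congr (_ * _).
rewrite [RHS](reindex_inj (@perm_inj _ pi)) /=.
by apply: eq_bigr => r _; rewrite mxE permM !permK.
Qed.

Lemma sum_perm_det_gram_ge0 (P : finType) (w : 'I_N -> P -> F) (g : 'I_N -> P -> 'I_N -> F) :
  (forall r p, 0 <= w r p) ->
  0 <= \sum_(pi : 'S_N) \det (\matrix_(i, k) \sum_(p : P) w (pi i) p * g (pi i) p i * g (pi i) p k).
Proof.
move=> hw.
rewrite (sum_perm_det_row_types (fun r s t => \sum_(p : P) w r p * g r p s * g r p t)).
set det_g := fun (f : {ffun 'I_N -> P}) =>
  \sum_(a : 'S_N) (-1) ^+ a * \prod_(r < N) g r (f r) (a r).
have -> : \sum_(a : 'S_N) \sum_(b : 'S_N) (-1) ^+ a * (-1) ^+ b *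
     \prod_(r < N) (\sum_(p : P) w r p * g r p (a r) * g r p (b r))
   = \sum_(f : {ffun 'I_N -> P}) (\prod_(r < N) w r (f r)) * det_g f ^+ 2.
  under eq_bigr => a _ do under eq_bigr => b _ do rewrite bigA_distr_bigA mulr_sumr.
  under eq_bigr => a _ do rewrite exchange_big.
  rewrite exchange_big; apply: eq_bigr => f _.
  rewrite expr2 /det_g /= mulr_suml mulr_sumr; apply: eq_bigr => a _.
  rewrite !mulr_sumr; apply: eq_bigr => b _.
  rewrite !big_split /=.
  move: (\prod_(i < N) w i (f i)) (\prod_(i < N) g i (f i) (a i))
    (\prod_(i < N) g i (f i) (b i)) ((-1) ^+ a : F) ((-1) ^+ b : F) => W Ga Gb sa sb.
  ring.
apply: sumr_ge0 => f _; apply: mulr_ge0; last exact: sqr_ge0.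
by apply: prodr_ge0 => r _.
Qed.

End MixedGramDeterminant.

Section BigOpCalculus.
Import GRing.Theory.
Local Open Scope ring_scope.

Lemma is_derive_bigsum (I : Type) (r : seq I) (f : I -> R -> R) (f' : I -> R) (x : R) :
  (forall i, is_derive (f i) x (f' i)) ->
  is_derive (fun y => \sum_(i <- r) f i y) x (\sum_(i <- r) f' i).
Proof.
move=> hf; elim: r => [|h r IH].
  apply: (@is_derive_ext R_AbsRing R_NormedModule (fun _ => 0)) => [t|].
    by rewrite big_nil.
  by rewrite big_nil; apply: is_derive_const.
apply: (@is_derive_ext R_AbsRing R_NormedModule (fun y => f h y + \sum_(i <- r) f i y)).
  by move=> t; rewrite big_cons.
by rewrite big_cons; apply: is_derive_plus.
Qed.

Lemma is_derive_bigprod (I : eqType) (r : seq I) (f : I -> R -> R) (f' : I -> R) (x : R) :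
  uniq r -> (forall i, is_derive (f i) x (f' i)) ->
  is_derive (fun y => \prod_(i <- r) f i y) x
    (\sum_(i <- r) \prod_(l <- r) (if l == i then f' l else f l x)).
Proof.
move=> + hf; elim: r => [|h r IH] /=.
  move=> _; apply: (@is_derive_ext R_AbsRing R_NormedModule (fun _ => 1)).
    by move=> t; rewrite big_nil.
  by rewrite big_nil; apply: is_derive_const.
move=> /andP[hr /IH{}IH].
apply: (@is_derive_ext R_AbsRing R_NormedModule (fun y => f h y * \prod_(i <- r) f i y)).
  by move=> t; rewrite big_cons.
have -> : \sum_(i <- h :: r) \prod_(l <- h :: r) (if l == i then f' l else f l x)
    = f' h * \prod_(i <- r) f i x
      + f h x * \sum_(i <- r) \prod_(l <- r) (if l == i then f' l else f l x).
  rewrite big_cons big_cons eqxx; congr (_ * _ + _).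
    rewrite big_seq_cond [RHS]big_seq_cond; apply: eq_bigr => l /andP[hl _].
    by rewrite (negbTE (memPn hr l hl)).
  rewrite mulr_sumr big_seq_cond [RHS]big_seq_cond; apply: eq_bigr => i /andP[hi _].
  by rewrite big_cons eq_sym (negbTE (memPn hr i hi)).
exact: (is_derive_mult _ _ _ _ _ (hf h) IH (fun a b => Rmult_comm a b)).
Qed.

Lemma is_derive_det (N : nat) (A : R -> 'M[R]_N) (A' : 'M[R]_N) (x : R) :
  (forall i k, is_derive (fun y => A y i k) x (A' i k)) ->
  is_derive (fun y => \det (A y)) x
    (\sum_(i < N) \det (\matrix_(r, k) if r == i then A' r k else A x r k)).
Proof.
move=> hA; rewrite exchange_big /=.
apply: is_derive_bigsum => s; rewrite -mulr_sumr.
apply: is_derive_scal.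
under eq_bigr => i _ do under eq_bigr => l _ do rewrite mxE.
apply: is_derive_bigprod => [|l]; [exact: index_enum_uniq | exact: hA].
Qed.

Lemma is_lim_seq_bigsum (I : Type) (r : seq I) (u : I -> nat -> R) (l : I -> R) :
  (forall i, is_lim_seq (u i) (l i)) ->
  is_lim_seq (fun K => \sum_(i <- r) u i K) (\sum_(i <- r) l i).
Proof.
move=> hu; elim: r => [|h r IH].
  apply: (is_lim_seq_ext (fun _ => 0)) => [t|]; first by rewrite big_nil.
  by rewrite big_nil; apply: is_lim_seq_const.
apply: (is_lim_seq_ext (fun K => u h K + \sum_(i <- r) u i K)) => [t|].
  by rewrite big_cons.
by rewrite big_cons; apply: is_lim_seq_plus'.
Qed.

Lemma is_lim_seq_bigprod (I : Type) (r : seq I) (u : I -> nat -> R) (l : I -> R) :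
  (forall i, is_lim_seq (u i) (l i)) ->
  is_lim_seq (fun K => \prod_(i <- r) u i K) (\prod_(i <- r) l i).
Proof.
move=> hu; elim: r => [|h r IH].
  apply: (is_lim_seq_ext (fun _ => 1)) => [t|]; first by rewrite big_nil.
  by rewrite big_nil; apply: is_lim_seq_const.
apply: (is_lim_seq_ext (fun K => u h K * \prod_(i <- r) u i K)) => [t|].
  by rewrite big_cons.
by rewrite big_cons; apply: is_lim_seq_mult'.
Qed.

Lemma is_lim_seq_det (N : nat) (A : nat -> 'M[R]_N) (L : 'M[R]_N) :
  (forall i k, is_lim_seq (fun K => A K i k) (L i k)) ->
  is_lim_seq (fun K => \det (A K)) (\det L).
Proof.
move=> hA; apply: is_lim_seq_bigsum => s.
apply: is_lim_seq_mult'; first exact: is_lim_seq_const.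
by apply: is_lim_seq_bigprod => i.
Qed.

End BigOpCalculus.

Section IncrementSums.
Import GRing.Theory Num.Theory.
Local Open Scope ring_scope.
Context {N : nat}.

Definition incr (a : 'I_N -> nat) (i : 'I_N) : 'I_N -> nat := fun l => (a l + (l == i))%N.

(* [incr_sum k g a] is the sum of [g] over the [N ^ k] ways of adding [k] unit increments to
   [a], one coordinate at a time. *)
Fixpoint incr_sum (k : nat) (g : ('I_N -> nat) -> R) : ('I_N -> nat) -> R :=
  if k is k'.+1 then incr_sum k' (fun b => \sum_(i < N) g (incr b i)) else g.

Lemma incr_sum_ge0 k g a : (forall b, 0 <= g b) -> 0 <= incr_sum k g a.
Proof.
elim: k g => [|k IH] g hg //=; apply: IH => b.
by apply: sumr_ge0 => i _.
Qed.

Lemma incr_sum_opp k g a : incr_sum k (fun b => - g b) a = - incr_sum k g a.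
Proof.
elim: k g => [|k IH] g //=; rewrite -IH; congr incr_sum.
by apply: functional_extensionality => b; rewrite sumrN.
Qed.

Lemma incr_sum_sum (I : finType) k (g : I -> ('I_N -> nat) -> R) a :
  incr_sum k (fun b => \sum_(p : I) g p b) a = \sum_(p : I) incr_sum k (g p) a.
Proof.
elim: k g => [|k IH] g //=; rewrite -IH; congr incr_sum.
by apply: functional_extensionality => b; rewrite exchange_big.
Qed.

Lemma incr_sum_perm k g a (pi : 'S_N) :
  incr_sum k (fun b => g (b \o pi)) a = incr_sum k g (a \o pi).
Proof.
elim: k g => [|k IH] g //=; rewrite -IH; congr incr_sum.
apply: functional_extensionality => b.
rewrite (reindex_inj (@perm_inj _ pi)); apply: eq_bigr => i _; congr g.
by apply: functional_extensionality => l; rewrite /incr /= (inj_eq (@perm_inj _ pi)).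
Qed.

Lemma is_derive_incr_sum k (g : ('I_N -> nat) -> R -> R) g' a x :
  (forall b, is_derive (g b) x (g' b)) ->
  is_derive (fun y => incr_sum k (g^~ y) a) x (incr_sum k g' a).
Proof.
elim: k g g' => [|k IH] g g' hg //=.
apply: (IH (fun b y => \sum_(i < N) g (incr b i) y)) => b.
exact: is_derive_bigsum.
Qed.

End IncrementSums.

Lemma odd_half_split c s t j :
  (c + (s + t) * j = (c./2 + s * j) + (c./2 + t * j) + odd c)%N.
Proof. have := odd_double_half c; rewrite -addnn; case: (odd c) => /= E; lia. Qed.

Section ShiftedHankel.
Import ring GRing.Theory Num.Theory.
Local Open Scope ring_scope.
Variables n m j : nat.
Hypothesis n_ge2 : (2 <= n)%N.

Definition shifted_hankel (a : 'I_m.+1 -> nat) (y : R) : 'M[R]_m.+1 :=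
  \matrix_(i, k) psi2_abs (n + a i + (i + k) * j)%N y.

Lemma is_derive_det_shifted_hankel a x : 0 < x ->
  is_derive (fun y => \det (shifted_hankel a y)) x
    (- \sum_(i < m.+1) \det (shifted_hankel (incr a i) x)).
Proof.
move=> hx.
set dA : 'M[R]_m.+1 := \matrix_(i, k) - psi2_abs (n + a i + (i + k) * j)%N.+1 x.
have hA i k : is_derive (fun y => shifted_hankel a y i k) x (dA i k).
  apply: (@is_derive_ext R_AbsRing R_NormedModule (psi2_abs (n + a i + (i + k) * j)%N)).
    by move=> y; rewrite mxE.
  by rewrite mxE; apply: is_derive_psi2_abs; [apply/RltP | lia].
rewrite -sumrN; have := is_derive_det _ (shifted_hankel a) _ _ hA.
congr is_derive; apply: eq_bigr => i _.
set A := \matrix_(r, k) _; set B := shifted_hankel (incr a i) x.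
have hrow : row i A = -1 *: row i B + 0 *: row i B.
  apply/rowP => k; rewrite !mxE eqxx mul0r addr0 mulN1r /incr eqxx.
  by congr (- psi2_abs _ _); lia.
have hrow' : row' i B = row' i A.
  apply/matrixP => r k.
  have hr : (lift i r == i) = false by rewrite eq_sym (negbTE (neq_lift i r)).
  by rewrite !mxE hr /incr hr addn0.
by rewrite (determinant_multilinear hrow hrow' hrow') mul0r addr0 mulN1r.
Qed.

(* Truncating the series turns every row into a Gram kernel ([psi2_abs_trunc_gram] after
   splitting the index with [odd_half_split]); the inequality then passes to the limit. *)
Lemma sum_perm_det_shifted_hankel_ge0 b y : 0 < y ->
  0 <= \sum_(pi : 'S_m.+1) \det (shifted_hankel (b \o pi) y).
Proof.
move=> hy.
set L := (n + \max_i b i + m * j).+1%N.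
pose e := fun r => odd (n + b r).
pose A := fun r (s : 'I_m.+1) => ((n + b r)./2 + s * j)%N.
pose HK := fun K (pi : 'S_m.+1) => \matrix_(i < m.+1, k < m.+1)
  psi2_abs_trunc K (n + b (pi i) + (i + k) * j)%N y.
have hK K : 0 <= \sum_(pi : 'S_m.+1) \det (HK K pi).
  have -> : \sum_(pi : 'S_m.+1) \det (HK K pi) = \sum_(pi : 'S_m.+1) \det (\matrix_(i, k)
      \sum_(p : 'I_K * 'I_L) gram_weight (e (pi i)) y p.1 p.2
        * gram_vector (e (pi i)) (A (pi i) i) y p.1 p.2
        * gram_vector (e (pi i)) (A (pi i) k) y p.1 p.2).
    apply: eq_bigr => pi _; congr (\det _); apply/matrixP => i k; rewrite !mxE.
    rewrite (odd_half_split (n + b (pi i))) (psi2_abs_trunc_gram K L) //; first by apply/RltP.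
      by rewrite /e; case: odd.
    have hb : (b (pi i) <= \max_l b l)%N := leq_bigmax (pi i).
    have hk : (k * j <= m * j)%N by rewrite leq_mul2r -ltnS ltn_ord orbT.
    have := odd_double_half (n + b (pi i)); rewrite /A /L -addnn; lia.
  apply: (@sum_perm_det_gram_ge0 R _ _
    (fun r (p : 'I_K * 'I_L) => gram_weight (e r) y p.1 p.2)
    (fun r (p : 'I_K * 'I_L) s => gram_vector (e r) (A r s) y p.1 p.2)) => r p.
  by apply/RleP/gram_weight_ge0/RltP.
have hlim : is_lim_seq (fun K => \sum_(pi : 'S_m.+1) \det (HK K pi))
    (\sum_(pi : 'S_m.+1) \det (shifted_hankel (b \o pi) y)).
  apply: is_lim_seq_bigsum => pi; apply: is_lim_seq_det => i k.
  apply: (is_lim_seq_ext (fun K => psi2_abs_trunc K (n + b (pi i) + (i + k) * j) y)).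
    by move=> K; rewrite mxE.
  by rewrite mxE; apply: is_lim_seq_psi2_abs_trunc; [apply/RltP | lia].
apply/RleP; have /= := is_lim_seq_le _ _ _ _ _ (is_lim_seq_const R0) hlim.
by apply=> K; apply/RleP.
Qed.

Definition signed_deriv_hankel (k : nat) (y : R) : R :=
  incr_sum k (fun a => \det (shifted_hankel a y)) (fun _ => 0%N).

Lemma is_derive_signed_deriv_hankel k x : 0 < x ->
  is_derive (signed_deriv_hankel k) x (- signed_deriv_hankel k.+1 x).
Proof.
move=> hx; rewrite /signed_deriv_hankel /= -incr_sum_opp.
by apply: is_derive_incr_sum => a; apply: is_derive_det_shifted_hankel.
Qed.

(* Averaging over the row permutations is what makes the summands nonnegative. *)
Lemma signed_deriv_hankel_ge0 k x : 0 < x -> 0 <= signed_deriv_hankel k x.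
Proof.
move=> hx.
have hsum : \sum_(pi : 'S_m.+1) signed_deriv_hankel k x = incr_sum k
    (fun b => \sum_(pi : 'S_m.+1) \det (shifted_hankel (b \o pi) x)) (fun _ => 0%N).
  rewrite incr_sum_sum; apply: eq_bigr => pi _.
  by rewrite (incr_sum_perm k (fun a => \det (shifted_hankel a x))).
have : 0 <= \sum_(pi : 'S_m.+1) signed_deriv_hankel k x.
  by rewrite hsum; apply: incr_sum_ge0 => b; apply: sum_perm_det_shifted_hankel_ge0.
by rewrite sumr_const card_Sn -mulr_natl pmulr_rge0 // ltr0n fact_gt0.
Qed.

Lemma D_hankelE y :
  (-1) ^+ ((n + 1) * (m + 1)) * D_hankel n m j y = \det (shifted_hankel (fun _ => 0%N) y).
Proof.
rewrite /D_hankel; set H := shifted_hankel (fun _ => 0%N) y.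
pose sgn_row : 'rV[R]_m.+1 := \row_i (-1) ^+ (n.+1 + i * j).
pose sgn_col : 'rV[R]_m.+1 := \row_k (-1) ^+ (k * j).
have -> : hankel_psi2 n m j y = diag_mx sgn_row *m H *m diag_mx sgn_col.
  apply/matrixP => i k; rewrite mul_mx_diag mul_diag_mx !mxE psi2E RpowE RmultE.
  rewrite mulrAC -exprD; congr (_ ^+ _ * psi2_abs _ _); lia.
rewrite !det_mulmx !det_diag.
set S := (\sum_(i < m.+1) i * j)%N.
have -> : \prod_i sgn_row 0 i = (-1) ^+ ((n + 1) * (m + 1) + S).
  rewrite (eq_bigr (fun i : 'I_m.+1 => (-1) ^+ (n.+1 + i * j))) => [|i _]; last first.
    by rewrite mxE.
  by rewrite prodrXr big_split /= sum_nat_const card_ord !addn1 mulnC.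
have -> : \prod_k sgn_col 0 k = (-1) ^+ S.
  rewrite (eq_bigr (fun k : 'I_m.+1 => (-1) ^+ (k * j))) => [|k _]; last by rewrite mxE.
  by rewrite prodrXr.
transitivity ((-1) ^+ (((n + 1) * (m + 1) + S).*2) * \det H).
  by rewrite -addnn !exprD; ring.
by rewrite -signr_odd odd_double mul1r.
Qed.

End ShiftedHankel.

Lemma completely_monotonic_derive_chain (f : R -> R) (T : nat -> R -> R) :
  (forall y, 0 < y -> f y = T 0%nat y) ->
  (forall k x, 0 < x -> is_derive (T k) x (- T k.+1 x)) ->
  (forall k x, 0 < x -> 0 <= T k x) ->
  completely_monotonic f.
Proof.
move=> hf hT hT0.
have hDn k x : 0 < x -> ex_derive_n f k x /\ Derive_n f k x = (-1) ^ k * T k x.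
  elim: k x => [|k IH] x hx; first by split=> //=; rewrite hf // Rmult_1_l.
  have hloc : locally x (fun t => (-1) ^ k * T k t = Derive_n f k t).
    exists (mkposreal x hx) => t ht.
    have /Rabs_def2 [_ ht0] : Rabs (t - x) < x := ht.
    by rewrite (proj2 (IH t _)) //; lra.
  have hd : is_derive (fun t => (-1) ^ k * T k t) x ((-1) ^ k * - T k.+1 x).
    exact/is_derive_scal/hT.
  split => /=.
    by apply: (ex_derive_ext_loc _ _ _ hloc); exists ((-1) ^ k * - T k.+1 x).
  by rewrite -(Derive_ext_loc _ _ _ hloc) (is_derive_unique _ _ _ hd); ring.
move=> k x hx; have [hex ->] := hDn k x hx; split=> //.
rewrite -Rmult_assoc -Rpow_mult_distr (_ : -1 * -1 = 1); last ring.
by rewrite pow1 Rmult_1_l; apply: hT0.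
Qed.

Theorem proposition4p1 (n m j : nat) :
  (2 <= n)%nat -> (1 <= m)%nat -> (1 <= j)%nat ->
  completely_monotonic
    (fun y : R => (-1) ^ ((n + 1) * (m + 1)) * D_hankel n m j y).
Proof.
move=> hn _ _.
apply: (completely_monotonic_derive_chain _ (signed_deriv_hankel n m j)).
- by move=> y _; rewrite RpowE RmultE D_hankelE.
- by move=> k x /RltP hx; apply: is_derive_signed_deriv_hankel.
- by move=> k x /RltP hx; apply/RleP/signed_deriv_hankel_ge0.
Qed.
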